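(* Consider problem (VP) under the standing assumptions at $\bar x\in Q_0$. Let $\bar x$ be a local Geoffrion properly efficient solution of (VP), and suppose $L^2(Q;\bar x,u)\subset T^2(Q_0;\bar x,u)$ for every critical direction $u\in\mathcal{C}(\bar x)$. Then there is no pair $(u,v)\in X\times X$ such that $F_i^2(\bar x;u,v)\leqq_{\rm lex}(0,0)$ for all $i\in I$, $F_i^2(\bar x;u,v)<_{\rm lex}(0,0)$ for at least one $i\in I(\bar x;u)$, and $G_j^2(\bar x;u,v)\leqq_{\rm lex}(0,0)$ for all $j\in J(\bar x)$.
   Context: Standing setting: $X$ is a Banach space; $I=\{1,\dots,p\}$, $J=\{1,\dots,m\}$; $f_i,g_j\colon X\to\mathbb{R}$; (VP) minimizes $f=(f_1,\dots,f_p)$ over $Q_0:=\{x\in X: g_j(x)\leqq 0,\ j\in J\}$. $J(\bar x):=\{j\in J: g_j(\bar x)=0\}$. Standing assumptions: $f_i$ ($i\in I$), $g_j$ ($j\in J(\bar x)$) locally Lipschitz at $\bar x$; $g_j$ ($j\notin J(\bar x)$) continuous at $\bar x$. $F^{\circ}(\bar x,u):=\limsup_{x\to\bar x,\,t\downarrow0}\frac{F(x+tu)-F(x)}{t}$; $F^{\circ\circ}(\bar x,u):=\limsup_{t\downarrow0}\frac{F(\bar x+tu)-F(\bar x)-tF^{\circ}(\bar x,u)}{\frac12t^2}$. Lexicographic order on $\mathbb{R}^2$: $a\leqq_{\rm lex}b$ iff $a_1<b_1$ or ($a_1=b_1$, $a_2\leqq b_2$); $a<_{\rm lex}b$ iff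 $a_1<b_1$ or ($a_1=b_1$, $a_2<b_2$). $F_i^2(\bar x;u,v):=(f_i^{\circ}(\bar x,u),\, f_i^{\circ}(\bar x,v)+f_i^{\circ\circ}(\bar x,u))$, $G_j^2(\bar x;u,v):=(g_j^{\circ}(\bar x,u),\, g_j^{\circ}(\bar x,v)+g_j^{\circ\circ}(\bar x,u))$; $I(\bar x;u):=\{i\in I: f_i^{\circ}(\bar x,u)=0\}$. $Q:=Q_0\cap\{x: f_i(x)\leqq f_i(\bar x),\ i\in I\}$; $L^2(Q;\bar x,u):=\{v: F_i^2(\bar x;u,v)\leqq_{\rm lex}(0,0)\ \forall i\in I,\ G_j^2(\bar x;u,v)\leqq_{\rm lex}(0,0)\ \forall j\in J(\bar x)\}$. $T^2(\Omega;\bar x,u):=\{v: \exists t_k\downarrow0,\ \exists v^k\to v,\ \bar x+t_ku+\frac12t_k^2v^k\in\Omega\ \forall k\}$. Critical direction: $u$ with $f_i^{\circ}(\bar x,u)\leqq0$ for all $i$, $=0$ for some $i$, and $g_j^{\circ}(\bar x,u)\leqq0$ for all $j\in J(\bar x)$; $\mathcal{C}(\bar x)$ is the set of these. Local Geoffrion properly efficient solution: there is a neighborhood $U$ of $\bar x$ such that (a) no $x\in U\cap Q_0$ has $f(x)\leqq f(\bar x)$ componentwise with $f(x)\ne f(\bar x)$, and (b) there is $M>0$ such that for every $i\in I$ and every $x\in U\cap Q_0$ with $f_i(x)<f_i(\bar x)$ there exists $j\in I$ with $f_j(x)>f_j(\bar x)$ and $\frac{f_i(\bar x)-f_i(x)}{f_j(x)-f_j(\bar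 x)}\leqq M$. *)

From Stdlib Require Import Reals Lra Classical ClassicalEpsilon.
Open Scope R_scope.

Record Banach := {
  car :> Type;
  bzero : car;
  badd : car -> car -> car;
  bopp : car -> car;
  bscal : R -> car -> car;
  bnorm : car -> R;
  badd_assoc : forall x y z, badd x (badd y z) = badd (badd x y) z;
  badd_comm : forall x y, badd x y = badd y x;
  badd_zero : forall x, badd x bzero = x;
  badd_opp : forall x, badd x (bopp x) = bzero;
  bscal_one : forall x, bscal 1 x = x;
  bscal_assoc : forall a b x, bscal a (bscal b x) = bscal (a * b) x;
  bscal_distr_l : forall a x y, bscal a (badd x y) = badd (bscal a x) (bscal a y);
  bscal_distr_r : forall a b x, bscal (a + b) x = badd (bscal a x) (bscal b x);
  bnorm_eq0 : forall x, bnorm x = 0 -> x = bzero;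
  bnorm_scal : forall a x, bnorm (bscal a x) = Rabs a * bnorm x;
  bnorm_triangle : forall x y, bnorm (badd x y) <= bnorm x + bnorm y;
  bcomplete : forall s : nat -> car,
    (forall eps, 0 < eps -> exists N, forall n k, (N <= n)%nat -> (N <= k)%nat ->
        bnorm (badd (s n) (bopp (s k))) < eps) ->
    exists l, forall eps, 0 < eps -> exists N, forall n, (N <= n)%nat ->
        bnorm (badd (s n) (bopp l)) < eps
}.

Arguments bzero {_}.
Arguments badd {_} _ _.
Arguments bopp {_} _.
Arguments bscal {_} _ _.
Arguments bnorm {_} _.

Definition bdist {X : Banach} (x y : X) : R := bnorm (badd x (bopp y)).

Inductive ERbar := Fin (r : R) | PInf | MInf.

Definition ER_le (a b : ERbar) : Prop :=
  match a, b with
  | MInf, _ => True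
  | _, PInf => True
  | Fin x, Fin y => x <= y
  | _, _ => False
  end.

Definition ER_lt (a b : ERbar) : Prop :=
  match a, b with
  | MInf, MInf => False
  | MInf, _ => True
  | PInf, _ => False
  | Fin _, PInf => True
  | Fin x, Fin y => x < y
  | Fin _, MInf => False
  end.

(* addition; the ambiguous case +oo + -oo never occurs in our uses
   (the first summand is always finite under the standing assumptions) *)
Definition ER_plus (a b : ERbar) : ERbar :=
  match a, b with
  | Fin x, Fin y => Fin (x + y)
  | PInf, _ => PInf
  | _, PInf => PInf
  | _, _ => MInf
  end.

Definition real_of (a : ERbar) : R := match a with Fin x => x | _ => 0 end.

Definition Rsup (E : R -> Prop) : ERbar :=
  match excluded_middle_informative (exists x, E x) with
  | left Hne =>
      match excluded_middle_informative (bound E) with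
      | left Hb => Fin (proj1_sig (completeness E Hb Hne))
      | right _ => PInf
      end
  | right _ => MInf
  end.

Definition Einf (E : ERbar -> Prop) : ERbar :=
  match excluded_middle_informative (E MInf) with
  | left _ => MInf
  | right _ =>
      let E' := fun y => E (Fin (- y)) in
      match excluded_middle_informative (exists y, E' y) with
      | left Hne =>
          match excluded_middle_informative (bound E') with
          | left Hb => Fin (- proj1_sig (completeness E' Hb Hne))
          | right _ => MInf
          end
      | right _ => PInf
      end
  end.

Definition limsup0 (h : R -> R) : ERbar :=
  Einf (fun s => exists d, 0 < d /\
          s = Rsup (fun y => exists t, 0 < t < d /\ y = h t)).

Definition clarke {X : Banach} (F : X -> R) (xb u : X) : ERbar :=
  Einf (fun s => exists d, 0 < d /\
          s = Rsup (fun y => exists (x : X) (t : R), bdist x xb < d /\ 0 < t < d /\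
                   y = (F (badd x (bscal t u)) - F x) / t)).

(* second-order derivative F°°(xb,u); F°(xb,u) is finite under the standing
   (local Lipschitz) assumptions, so real_of is faithful there *)
Definition clarke2 {X : Banach} (F : X -> R) (xb u : X) : ERbar :=
  limsup0 (fun t => (F (badd xb (bscal t u)) - F xb - t * real_of (clarke F xb u))
                    / (/2 * t ^ 2)).

Definition second_pair {X : Banach} (F : X -> R) (xb u v : X) : ERbar * ERbar :=
  (clarke F xb u, ER_plus (clarke F xb v) (clarke2 F xb u)).

Definition lex_le0 (a : ERbar * ERbar) : Prop :=
  ER_lt (fst a) (Fin 0) \/ (fst a = Fin 0 /\ ER_le (snd a) (Fin 0)).
Definition lex_lt0 (a : ERbar * ERbar) : Prop :=
  ER_lt (fst a) (Fin 0) \/ (fst a = Fin 0 /\ ER_lt (snd a) (Fin 0)).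

Definition loc_lipschitz {X : Banach} (F : X -> R) (xb : X) : Prop :=
  exists L d, 0 < d /\ forall x y : X, bdist x xb < d -> bdist y xb < d ->
    Rabs (F x - F y) <= L * bdist x y.

Definition continuous_at {X : Banach} (F : X -> R) (xb : X) : Prop :=
  forall eps, 0 < eps -> exists d, 0 < d /\ forall x : X, bdist x xb < d ->
    Rabs (F x - F xb) < eps.

(* ---------- the problem (VP): I = {0..p-1}, J = {0..m-1} ---------- *)
Section VP.
Context {X : Banach} (p m : nat) (f g : nat -> X -> R).

Definition Q0 (x : X) : Prop := forall j, (j < m)%nat -> g j x <= 0.

Definition active (xb : X) (j : nat) : Prop := (j < m)%nat /\ g j xb = 0.

Definition Qset (xb x : X) : Prop := Q0 x /\ forall i, (i < p)%nat -> f i x <= f i xb.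

Definition L2 (xb u v : X) : Prop :=
  (forall i, (i < p)%nat -> lex_le0 (second_pair (f i) xb u v)) /\
  (forall j, active xb j -> lex_le0 (second_pair (g j) xb u v)).

Definition critical (xb u : X) : Prop :=
  (forall i, (i < p)%nat -> ER_le (clarke (f i) xb u) (Fin 0)) /\
  (exists i, (i < p)%nat /\ clarke (f i) xb u = Fin 0) /\
  (forall j, active xb j -> ER_le (clarke (g j) xb u) (Fin 0)).

Definition geoffrion_local (xb : X) : Prop :=
  exists d, 0 < d /\
  (~ exists x, bdist x xb < d /\ Q0 x /\
        (forall i, (i < p)%nat -> f i x <= f i xb) /\
        (exists i, (i < p)%nat /\ f i x <> f i xb)) /\
  (exists M, 0 < M /\ forall i x, (i < p)%nat -> bdist x xb < d -> Q0 x ->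
      f i x < f i xb ->
      exists j, (j < p)%nat /\ f j x > f j xb /\
        (f i xb - f i x) / (f j x - f j xb) <= M).
End VP.

Definition T2 {X : Banach} (Om : X -> Prop) (xb u v : X) : Prop :=
  exists (t : nat -> R) (vk : nat -> X),
    (forall k, 0 < t k) /\ Un_cv t 0 /\
    (forall eps, 0 < eps -> exists N, forall k, (N <= k)%nat -> bdist (vk k) v < eps) /\
    (forall k, Om (badd xb (badd (bscal (t k) u) (bscal (/2 * (t k) ^ 2) (vk k))))).

(* If such (u, v) existed, u would be critical and v in L^2(Q; xb, u), so the
   tangent-set hypothesis yields feasible points
   x_k = xb + t_k u + t_k^2/2 v_k with t_k -> 0+ and v_k -> v.  Along such
   points every f_i increases by at most o(t_k^2), since its first-order term is
   negative or its second-order term is nonpositive, whereas f_i0 decreases by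
   at least c t_k^2/2 for a fixed c > 0.  Hence the trade-off ratios
   (f_i0(xb) - f_i0(x_k)) / (f_j(x_k) - f_j(xb)) blow up, contradicting the
   Geoffrion bound M. *)

From Stdlib Require Import Reals Lra Lia Classical ClassicalEpsilon.
Open Scope R_scope.

Arguments badd_assoc {_} _ _ _.
Arguments badd_comm {_} _ _.
Arguments badd_zero {_} _.
Arguments badd_opp {_} _.
Arguments bscal_one {_} _.
Arguments bscal_assoc {_} _ _ _.
Arguments bscal_distr_l {_} _ _ _.
Arguments bscal_distr_r {_} _ _ _.
Arguments bnorm_scal {_} _ _.
Arguments bnorm_triangle {_} _ _.

Section NormedSpace.
Context {X : Banach}.
Implicit Types x y a b w : X.

Lemma badd_0l x : badd bzero x = x.
Proof. rewrite badd_comm; apply badd_zero. Qed.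

Lemma badd_eq0_opp x y : badd x y = bzero -> y = bopp x.
Proof.
  intro H. rewrite <- (badd_zero y), <- (badd_opp x), badd_assoc, (badd_comm y x), H.
  apply badd_0l.
Qed.

Lemma badd_diag_eq x : x = badd x x -> x = bzero.
Proof.
  intro H. transitivity (badd (badd x x) (bopp x)).
  - rewrite <- badd_assoc, badd_opp, badd_zero; reflexivity.
  - rewrite <- H; apply badd_opp.
Qed.

Lemma bscal_0 x : bscal 0 x = bzero.
Proof. apply badd_diag_eq. rewrite <- bscal_distr_r. f_equal; ring. Qed.

Lemma bopp_scal x : bopp x = bscal (-1) x.
Proof.
  symmetry. apply badd_eq0_opp. rewrite <- (bscal_one x) at 1.
  rewrite <- bscal_distr_r. replace (1 + -1) with 0 by ring. apply bscal_0.
Qed.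

Lemma bnorm_0 : bnorm (@bzero X) = 0.
Proof. rewrite <- (bscal_0 bzero), bnorm_scal, Rabs_R0; ring. Qed.

Lemma bnorm_opp x : bnorm (bopp x) = bnorm x.
Proof. rewrite bopp_scal, bnorm_scal, (Rabs_left (-1)) by lra; ring. Qed.

Lemma bnorm_ge0 x : 0 <= bnorm x.
Proof.
  pose proof (bnorm_triangle x (bopp x)) as H.
  rewrite badd_opp, bnorm_0, bnorm_opp in H. lra.
Qed.

Lemma bopp_add a b : bopp (badd a b) = badd (bopp a) (bopp b).
Proof. rewrite !bopp_scal. apply bscal_distr_l. Qed.

Lemma bscal_sub c a b : bscal c (badd a (bopp b)) = badd (bscal c a) (bopp (bscal c b)).
Proof. rewrite !bopp_scal, bscal_distr_l, !bscal_assoc. do 2 f_equal. ring. Qed.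

Lemma bdist_ge0 x y : 0 <= bdist x y.
Proof. apply bnorm_ge0. Qed.

Lemma bdist_xx x : bdist x x = 0.
Proof. unfold bdist. rewrite badd_opp. apply bnorm_0. Qed.

Lemma bdist_add2l a x y : bdist (badd a x) (badd a y) = bdist x y.
Proof.
  unfold bdist. f_equal. rewrite bopp_add, (badd_comm a x), <- badd_assoc.
  rewrite (badd_assoc a), badd_opp, badd_0l. reflexivity.
Qed.

Lemma bdist_addr a b : bdist (badd a b) a = bnorm b.
Proof.
  unfold bdist. f_equal. rewrite (badd_comm a b), <- badd_assoc, badd_opp, badd_zero.
  reflexivity.
Qed.

Lemma bdist_scal c x y : bdist (bscal c x) (bscal c y) = Rabs c * bdist x y.
Proof. unfold bdist. rewrite <- bscal_sub. apply bnorm_scal. Qed.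

Lemma bnorm_le_dist w v : bnorm w <= bnorm v + bdist w v.
Proof.
  unfold bdist. pose proof (bnorm_triangle (badd w (bopp v)) v) as H.
  rewrite <- badd_assoc, (badd_comm (bopp v) v), badd_opp, badd_zero in H. lra.
Qed.

End NormedSpace.

Definition parabola {X : Banach} (xb u : X) (t : R) (w : X) : X :=
  badd xb (badd (bscal t u) (bscal (/2 * t ^ 2) w)).

Section Parabola.
Context {X : Banach} (xb u : X).

Lemma bdist_line (t : R) : 0 <= t -> bdist (badd xb (bscal t u)) xb = t * bnorm u.
Proof. intro Ht. rewrite bdist_addr, bnorm_scal, Rabs_pos_eq; lra. Qed.

Lemma bdist_parabola_line t w :
  bdist (parabola xb u t w) (badd xb (bscal t u)) = /2 * t ^ 2 * bnorm w.
Proof.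
  unfold parabola. rewrite (badd_assoc xb), bdist_addr, bnorm_scal, Rabs_pos_eq; [lra|].
  apply Rmult_le_pos; [lra|apply pow2_ge_0].
Qed.

Lemma bdist_parabola t w w' :
  bdist (parabola xb u t w) (parabola xb u t w') = /2 * t ^ 2 * bdist w w'.
Proof.
  unfold parabola. rewrite !bdist_add2l, bdist_scal, Rabs_pos_eq; [lra|].
  apply Rmult_le_pos; [lra|apply pow2_ge_0].
Qed.

Lemma bdist_parabola_le v t w : 0 < t < 1 -> bdist w v < 1 ->
  bdist (parabola xb u t w) xb <= t * (bnorm u + bnorm v + 1).
Proof.
  intros Ht Hw. unfold parabola. rewrite bdist_addr.
  pose proof (bnorm_triangle (bscal t u) (bscal (/2 * t ^ 2) w)) as H.
  rewrite !bnorm_scal, (Rabs_pos_eq t), (Rabs_pos_eq (/2 * t ^ 2)) in H by nra.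
  pose proof (bnorm_le_dist w v). pose proof (bnorm_ge0 u). pose proof (bnorm_ge0 w).
  assert (Hs : /2 * t ^ 2 <= t) by nra.
  assert (/2 * t ^ 2 * bnorm w <= t * (bnorm v + 1)).
  { apply Rmult_le_compat; try lra. apply Rmult_le_pos; [lra|apply pow2_ge_0]. }
  nra.
Qed.

End Parabola.

Section Eventually.
Context {X : Banach} (v : X).

Definition eventually_tw (P : R -> X -> Prop) : Prop :=
  exists d, 0 < d /\ forall t w, 0 < t < d -> bdist w v < d -> P t w.

Lemma eventually_tw_impl (P Q : R -> X -> Prop) :
  (forall t w, 0 < t -> P t w -> Q t w) -> eventually_tw P -> eventually_tw Q.
Proof.
  intros HPQ [d [Hd HP]]. exists d; split; auto. intros t w Ht Hw. apply HPQ; [lra|auto].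
Qed.

Lemma eventually_tw_and (P Q : R -> X -> Prop) :
  eventually_tw P -> eventually_tw Q -> eventually_tw (fun t w => P t w /\ Q t w).
Proof.
  intros [d1 [Hd1 H1]] [d2 [Hd2 H2]]. exists (Rmin d1 d2).
  split; [apply Rmin_glb_lt; auto|]. intros t w Ht Hw.
  pose proof (Rmin_l d1 d2). pose proof (Rmin_r d1 d2).
  split; [apply H1|apply H2]; lra.
Qed.

Lemma eventually_tw_forall_lt (P : nat -> R -> X -> Prop) n :
  (forall j, (j < n)%nat -> eventually_tw (P j)) ->
  eventually_tw (fun t w => forall j, (j < n)%nat -> P j t w).
Proof.
  induction n as [|n IH]; intro H.
  - exists 1; split; [lra|]. intros; lia.
  - apply (eventually_tw_impl (fun t w => (forall j, (j < n)%nat -> P j t w) /\ P n t w)).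
    + intros t w _ [Hlt Hn] j Hj.
      destruct (Nat.eq_dec j n) as [->|Hne]; [exact Hn|apply Hlt; lia].
    + apply eventually_tw_and; [apply IH; intros j Hj|]; apply H; lia.
Qed.

Lemma eventually_tw_center (P : R -> X -> Prop) :
  eventually_tw P -> eventually_tw (fun t _ => P t v).
Proof.
  intros [d [Hd HP]]. exists d; split; auto. intros t _ Ht _. apply HP; auto.
  rewrite bdist_xx; exact Hd.
Qed.

Lemma eventually_tw_t_lt a b : 0 <= a -> 0 < b -> eventually_tw (fun t _ => t * a < b).
Proof.
  intros Ha Hb. exists (b / (a + 1)). split; [apply Rdiv_lt_0_compat; lra|].
  intros t w [Ht0 Ht] _. apply (Rmult_lt_compat_r (a + 1)) in Ht; [|lra].
  replace (b / (a + 1) * (a + 1)) with b in Ht by (field; lra). nra.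
Qed.

Lemma eventually_tw_w_lt a b : 0 <= a -> 0 < b ->
  eventually_tw (fun _ w => a * bdist w v < b).
Proof.
  intros Ha Hb. exists (b / (a + 1)). split; [apply Rdiv_lt_0_compat; lra|].
  intros t w _ Hw. apply (Rmult_lt_compat_r (a + 1)) in Hw; [|lra].
  replace (b / (a + 1) * (a + 1)) with b in Hw by (field; lra).
  pose proof (bdist_ge0 w v). nra.
Qed.

Lemma eventually_tw_seq (P : R -> X -> Prop) (t : nat -> R) (vk : nat -> X) :
  (forall k, 0 < t k) -> Un_cv t 0 ->
  (forall eps, 0 < eps -> exists N, forall k, (N <= k)%nat -> bdist (vk k) v < eps) ->
  eventually_tw P -> exists k, P (t k) (vk k).
Proof.
  intros Ht Htc Hvk [d [Hd HP]].
  destruct (Htc d Hd) as [N1 H1]. destruct (Hvk d Hd) as [N2 H2].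
  exists (N1 + N2)%nat. apply HP; [split|apply H2; lia].
  - apply Ht.
  - specialize (H1 (N1 + N2)%nat ltac:(lia)). unfold R_dist in H1.
    rewrite Rminus_0_r in H1. apply Rabs_def2 in H1. lra.
Qed.

End Eventually.

Lemma eventually_parabola_near {X : Banach} (xb u v : X) d : 0 < d ->
  eventually_tw v (fun t w => bdist (parabola xb u t w) xb < d).
Proof.
  intro Hd. pose proof (bnorm_ge0 u). pose proof (bnorm_ge0 v).
  set (K := bnorm u + bnorm v + 1).
  apply (eventually_tw_impl v (fun t w => (t * 1 < 1 /\ t * K < d) /\ 1 * bdist w v < 1)).
  - intros t w Ht [[H1 HK] Hw]. pose proof (bdist_parabola_le xb u v t w). unfold K in *. lra.
  - repeat apply eventually_tw_and;
      [apply eventually_tw_t_lt|apply eventually_tw_t_lt|apply eventually_tw_w_lt];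
      unfold K; lra.
Qed.

Lemma Einf_lt S r : ER_lt (Einf S) (Fin r) -> exists s, S s /\ ER_lt s (Fin r).
Proof.
  unfold Einf. destruct (excluded_middle_informative (S MInf)) as [HM|HM].
  - intros _. exists MInf; split; simpl; auto.
  - destruct (excluded_middle_informative (exists y, S (Fin (- y)))) as [Hne|Hne];
      [|simpl; tauto].
    intro H.
    destruct (classic (exists y, S (Fin (- y)) /\ - r < y)) as [[y [Hy1 Hy2]]|Hn].
    { exists (Fin (- y)); split; auto; simpl; lra. }
    exfalso.
    assert (Hub : is_upper_bound (fun y => S (Fin (- y))) (- r)).
    { intros y Hy. destruct (Rle_dec y (- r)); auto.
      exfalso; apply Hn; exists y; split; auto; lra. }
    destruct (excluded_middle_informative (bound (fun y => S (Fin (- y))))) as [Hb|Hb].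
    + destruct (proj2_sig (completeness _ Hb Hne)) as [_ Hlub]. simpl in H.
      specialize (Hlub _ Hub). lra.
    + apply Hb. exists (- r); exact Hub.
Qed.

Lemma Rsup_lt A r : ER_lt (Rsup A) (Fin r) -> forall y, A y -> y < r.
Proof.
  unfold Rsup. destruct (excluded_middle_informative (exists x, A x)) as [Hne|Hne].
  - destruct (excluded_middle_informative (bound A)) as [Hb|Hb]; [|simpl; tauto].
    destruct (completeness _ Hb Hne) as [sp [Hub Hlub]]. simpl. intros H y Hy.
    specialize (Hub y Hy). lra.
  - intros _ y Hy. exfalso; apply Hne; eauto.
Qed.

Lemma clarke_lt {X : Banach} (F : X -> R) xb w r : ER_lt (clarke F xb w) (Fin r) ->
  exists d, 0 < d /\ forall x t, bdist x xb < d -> 0 < t < d ->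
    (F (badd x (bscal t w)) - F x) / t < r.
Proof.
  intro H. apply Einf_lt in H. destruct H as [s [[d [Hd ->]] Hs]].
  exists d; split; auto. intros x t Hx Ht. eapply Rsup_lt; eauto.
  exists x, t; repeat split; auto; lra.
Qed.

Lemma limsup0_lt h r : ER_lt (limsup0 h) (Fin r) ->
  exists d, 0 < d /\ forall t, 0 < t < d -> h t < r.
Proof.
  intro H. apply Einf_lt in H. destruct H as [s [[d [Hd ->]] Hs]].
  exists d; split; auto. intros t Ht. eapply Rsup_lt; eauto.
  exists t; split; auto.
Qed.

Lemma ER_lt_le a b : ER_lt a b -> ER_le a b.
Proof. destruct a, b; simpl; auto; lra. Qed.

Lemma ER_lt_Fin_dense a r : ER_lt a (Fin r) -> exists r', r' < r /\ ER_lt a (Fin r').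
Proof.
  destruct a as [x| |]; simpl; intro H; try tauto.
  - exists ((x + r) / 2); simpl; split; lra.
  - exists (r - 1); simpl; split; auto; lra.
Qed.

Lemma ER_le_lt_Fin a r e : ER_le a (Fin r) -> 0 < e -> ER_lt a (Fin (r + e)).
Proof. destruct a; simpl; auto; lra. Qed.

Lemma ER_plus_lt_Fin a b r : ER_lt (ER_plus a b) (Fin r) ->
  exists ra rb, ER_lt a (Fin ra) /\ ER_lt b (Fin rb) /\ ra + rb < r.
Proof.
  intros H. destruct a as [x| |]; destruct b as [y| |]; simpl in H; try tauto.
  - exists (x + (r - x - y) / 3), (y + (r - x - y) / 3); simpl; repeat split; lra.
  - exists (x + 1), (r - x - 2); simpl; repeat split; auto; lra.
  - exists (r - y - 2), (y + 1); simpl; repeat split; auto; lra.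
  - exists (r / 2 - 1), (r / 2 - 1); simpl; repeat split; auto; lra.
Qed.

Lemma lex_le0_fst a : lex_le0 a -> ER_le (fst a) (Fin 0).
Proof. intros [H|[-> _]]; [apply ER_lt_le, H|simpl; lra]. Qed.

Lemma loc_lipschitz_upper {X : Banach} (F : X -> R) xb : loc_lipschitz F xb ->
  exists L d, 0 <= L /\ 0 < d /\ forall x y, bdist x xb < d -> bdist y xb < d ->
    F x - F y <= L * bdist x y.
Proof.
  intros [L [d [Hd H]]]. exists (Rmax L 0), d. split; [apply Rmax_r|split; auto].
  intros x y Hx Hy. specialize (H x y Hx Hy).
  assert (L * bdist x y <= Rmax L 0 * bdist x y).
  { apply Rmult_le_compat_r; [apply bdist_ge0|apply Rmax_l]. }
  pose proof (Rle_abs (F x - F y)). lra.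
Qed.

Lemma lt_mul_of_div_lt a s r : 0 < s -> a / s < r -> a < r * s.
Proof.
  intros Hs H. apply (Rmult_lt_compat_r s) in H; auto.
  replace (a / s * s) with a in H by (field; lra). exact H.
Qed.

Section ParabolaEstimates.
Context {X : Banach} (F : X -> R) (xb u v : X).
Hypothesis HF : loc_lipschitz F xb.

Lemma parabola_descent : ER_lt (clarke F xb u) (Fin 0) ->
  eventually_tw v (fun t w => F (parabola xb u t w) - F xb < 0).
Proof.
  intro Hc. destruct (ER_lt_Fin_dense _ _ Hc) as [r [Hr Hcr]].
  destruct (clarke_lt _ _ _ _ Hcr) as [d1 [Hd1 Hq]].
  destruct (loc_lipschitz_upper _ _ HF) as [L [d0 [HL [Hd0 Hlip]]]].
  pose proof (bnorm_ge0 u). pose proof (bnorm_ge0 v).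
  set (K := bnorm u + bnorm v + 1).
  apply (eventually_tw_impl v (fun t w =>
    ((t * 1 < 1 /\ t * 1 < d1) /\ (t * K < d0 /\ t * (L * K) < - r)) /\ 1 * bdist w v < 1)).
  2: { repeat apply eventually_tw_and;
       solve [apply eventually_tw_t_lt; unfold K; nra | apply eventually_tw_w_lt; lra]. }
  intros t w Ht [[[Ht1 Htd1] [HtK HtLK]] Hw].
  set (y := badd xb (bscal t u)).
  assert (Hyd : bdist y xb < d0).
  { unfold y. rewrite bdist_line by lra.
    assert (t * bnorm u <= t * K) by (apply Rmult_le_compat_l; unfold K; lra). lra. }
  assert (Hxd : bdist (parabola xb u t w) xb < d0).
  { pose proof (bdist_parabola_le xb u v t w ltac:(lra) ltac:(lra)). fold K in H1. lra. }
  pose proof (Hlip _ _ Hxd Hyd) as Hl. unfold y in Hl. rewrite bdist_parabola_line in Hl. fold y in Hl.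
  assert (Hline : F y - F xb < r * t).
  { apply lt_mul_of_div_lt; [lra|]. apply Hq; [rewrite bdist_xx|]; lra. }
  assert (Hw' : bnorm w <= K) by (pose proof (bnorm_le_dist w v); unfold K; lra).
  assert (L * (/2 * t ^ 2 * bnorm w) <= L * (/2 * t ^ 2 * K)).
  { apply Rmult_le_compat_l; auto. apply Rmult_le_compat_l; nra. }
  assert (L * (/2 * t ^ 2 * K) < t / 2 * - r) by nra.
  nra.
Qed.

Lemma parabola_second_order_bound ra rb r : clarke F xb u = Fin 0 ->
  ER_lt (clarke F xb v) (Fin ra) -> ER_lt (clarke2 F xb u) (Fin rb) -> ra + rb < r ->
  eventually_tw v (fun t w => F (parabola xb u t w) - F xb < /2 * t ^ 2 * r).
Proof.
  intros Hc Hv Hu Hr.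
  destruct (clarke_lt _ _ _ _ Hv) as [d1 [Hd1 Hq]].
  unfold clarke2 in Hu. rewrite Hc in Hu. change (real_of (Fin 0)) with 0 in Hu.
  destruct (limsup0_lt _ _ Hu) as [d2 [Hd2 Hlim]].
  destruct (loc_lipschitz_upper _ _ HF) as [L [d0 [HL [Hd0 Hlip]]]].
  pose proof (bnorm_ge0 u).
  set (eta := r - ra - rb).
  apply (eventually_tw_impl v (fun t w =>
    ((t * 1 < 1 /\ t * 1 < d1) /\ (t * 1 < d2 /\ t * bnorm u < d1)) /\
    ((bdist (parabola xb u t w) xb < d0 /\ bdist (parabola xb u t v) xb < d0) /\
     L * bdist w v < eta))).
  2: { repeat apply eventually_tw_and;
       try (apply eventually_tw_t_lt; lra);
       try (apply eventually_tw_w_lt; unfold eta; lra);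
       [|apply (eventually_tw_center v (fun t w => bdist (parabola xb u t w) xb < d0))];
       apply eventually_parabola_near; lra. }
  intros t w Ht [[[Ht1 Htd1] [Htd2 Htu]] [[Hxd Hzd] Hw]].
  set (s := /2 * t ^ 2) in *.
  assert (Hs : 0 < s < d1) by (unfold s; nra).
  set (y := badd xb (bscal t u)).
  assert (Hyd : bdist y xb < d1) by (unfold y; rewrite bdist_line; lra).
  pose proof (Hlip _ _ Hxd Hzd) as Hl. rewrite bdist_parabola in Hl. fold s in Hl.
  assert (Hstep : F (parabola xb u t v) - F y < ra * s).
  { apply lt_mul_of_div_lt; [lra|]. unfold parabola. rewrite badd_assoc. apply Hq; auto. }
  assert (Hline : F y - F xb < rb * s).
  { apply lt_mul_of_div_lt; [lra|]. replace (F y - F xb) with (F y - F xb - t * 0) by ring.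
    apply Hlim; lra. }
  assert (L * (s * bdist w v) <= s * eta).
  { replace (L * (s * bdist w v)) with (s * (L * bdist w v)) by ring.
    apply Rmult_le_compat_l; lra. }
  unfold eta in *. nra.
Qed.

Lemma lex_le0_parabola_increase eps : lex_le0 (second_pair F xb u v) -> 0 < eps ->
  eventually_tw v (fun t w => F (parabola xb u t w) - F xb < /2 * t ^ 2 * eps).
Proof.
  intros [Hlt|[Heq Hle]] He; simpl in *.
  - refine (eventually_tw_impl v _ _ _ (parabola_descent Hlt)). intros t w Ht H.
    assert (0 < /2 * t ^ 2 * eps) by (apply Rmult_lt_0_compat; nra). lra.
  - apply (ER_le_lt_Fin _ _ eps) in Hle; [|exact He]. rewrite Rplus_0_l in Hle.
    destruct (ER_plus_lt_Fin _ _ _ Hle) as [ra [rb [Ha [Hb Hab]]]].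
    exact (parabola_second_order_bound ra rb eps Heq Ha Hb Hab).
Qed.

Lemma lex_lt0_parabola_decrease : clarke F xb u = Fin 0 ->
  lex_lt0 (second_pair F xb u v) -> exists c, 0 < c /\
  eventually_tw v (fun t w => F (parabola xb u t w) - F xb < - (/2 * t ^ 2 * c)).
Proof.
  intros Hc [Hlt|[_ Hlt]]; simpl in Hlt.
  - rewrite Hc in Hlt; simpl in Hlt; lra.
  - destruct (ER_plus_lt_Fin _ _ _ Hlt) as [ra [rb [Ha [Hb Hab]]]].
    exists (- (ra + rb) / 2); split; [lra|].
    refine (eventually_tw_impl v _ _ _
      (parabola_second_order_bound ra rb ((ra + rb) / 2) Hc Ha Hb ltac:(lra))).
    intros t w _ H.
    replace (- (/2 * t ^ 2 * (- (ra + rb) / 2))) with (/2 * t ^ 2 * ((ra + rb) / 2)) by field.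
    exact H.
Qed.

End ParabolaEstimates.

Lemma ratio_gt_bound A D s c M : 0 < M -> 0 < c -> s * c < A ->
  0 < D < s * (c / (2 * M)) -> M < A / D.
Proof.
  intros HM Hc HA [HD0 HD]. apply (Rmult_lt_reg_r D); [lra|].
  replace (A / D * D) with A by (field; lra).
  assert (Hs : 0 < s) by (apply (Rmult_lt_reg_r (c / (2 * M))); [apply Rdiv_lt_0_compat|]; lra).
  assert (M * D < M * (s * (c / (2 * M)))) by (apply Rmult_lt_compat_l; lra).
  replace (M * (s * (c / (2 * M)))) with (s * c / 2) in H by (field; lra).
  nra.
Qed.

Theorem theorem5p1 (X : Banach) (p m : nat) (f g : nat -> X -> R) (xb : X)
  (Hxb : Q0 m g xb)
  (Hf : forall i, (i < p)%nat -> loc_lipschitz (f i) xb)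
  (Hga : forall j, active m g xb j -> loc_lipschitz (g j) xb)
  (Hgn : forall j, (j < m)%nat -> g j xb <> 0 -> continuous_at (g j) xb)
  (Hgeo : geoffrion_local p m f g xb)
  (HL2 : forall u, critical p m f g xb u ->
           forall v, L2 p m f g xb u v -> T2 (Q0 m g) xb u v) :
  ~ exists u v : X,
      (forall i, (i < p)%nat -> lex_le0 (second_pair (f i) xb u v)) /\
      (exists i, (i < p)%nat /\ clarke (f i) xb u = Fin 0 /\
                 lex_lt0 (second_pair (f i) xb u v)) /\
      (forall j, active m g xb j -> lex_le0 (second_pair (g j) xb u v)).
Proof.
  intros [u [v [Hfi [[i0 [Hi0 [Hc0 Hlt0]]] Hgj]]]].
  assert (Hcrit : critical p m f g xb u).
  { split; [|split]; [intros i Hi; apply (lex_le0_fst _ (Hfi i Hi))|eauto|].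
    intros j Hj; apply (lex_le0_fst _ (Hgj j Hj)). }
  destruct (HL2 u Hcrit v (conj Hfi Hgj)) as [t [vk [Ht [Htc [Hvk HQ]]]]].
  destruct Hgeo as [dg [Hdg [_ [M [HM Hbound]]]]].
  destruct (lex_lt0_parabola_decrease _ _ _ _ (Hf i0 Hi0) Hc0 Hlt0) as [c [Hc Hdec]].
  set (eps := c / (2 * M)).
  assert (Hinc : eventually_tw v (fun t w => forall j, (j < p)%nat ->
      f j (parabola xb u t w) - f j xb < /2 * t ^ 2 * eps)).
  { apply eventually_tw_forall_lt. intros j Hj.
    apply lex_le0_parabola_increase; [apply Hf, Hj|apply Hfi, Hj|].
    unfold eps; apply Rdiv_lt_0_compat; lra. }
  destruct (eventually_tw_seq v _ t vk Ht Htc Hvk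
    (eventually_tw_and v _ _ (eventually_tw_and v _ _ Hinc Hdec)
       (eventually_parabola_near xb u v dg Hdg))) as [k [[Hsmall Hi0k] Hnear]].
  assert (Hs : 0 < /2 * t k ^ 2) by (pose proof (Ht k); nra).
  set (x := parabola xb u (t k) (vk k)) in *.
  assert (Hx : f i0 x < f i0 xb).
  { assert (0 < /2 * t k ^ 2 * c) by (apply Rmult_lt_0_compat; lra). lra. }
  destruct (Hbound i0 x Hi0 Hnear (HQ k) Hx) as [j [Hj [Hgt Hratio]]].
  pose proof (Hsmall j Hj).
  assert (M < (f i0 xb - f i0 x) / (f j x - f j xb)).
  { apply (ratio_gt_bound _ _ (/2 * t k ^ 2) c); unfold eps in *; lra. }
  lra.
Qed.
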